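(* There exist class $\mathcal{K}_\infty$ functions $\alpha_1,\alpha_2$ such that: $V(x)\ge\alpha_1(|x|)$ for all $x\in\mathbb{X}$; $V(x)\le\alpha_2(|x|)$ for all $x\in\mathbb{X}_f$; $V(f(x,\kappa(x)))\le V(x)-\alpha_1(|x|)$ for all $x\in\mathbb{X}$.
   Context: Consider the discrete-time controlled system $x^+=f(x,u)$ with state $x\in\mathbb{R}^{n}$ and control $u\in\mathbb{R}^{m}$, constraint sets $\mathbb{X}\subset\mathbb{R}^n$, $\mathbb{U}\subset\mathbb{R}^m$, $\mathbb{Y}\subset\mathbb{R}^p$, and a constraint function $h(x,u)\in\mathbb{R}^p$. A control $u$ is feasible at $x\in\mathbb{X}$ if $u\in\mathbb{U}$, $f(x,u)\in\mathbb{X}$ and $h(x,u)\in\mathbb{Y}$. A control sequence $(u(0),\ldots,u(N-1))$ is feasible from $x$ if, for the state sequence defined by $x(0)=x$ and $x(k+1)=f(x(k),u(k))$, each $u(k)$ is feasible at $x(k)$. We are given a stage cost $l(x,u)$, a terminal set $\mathbb{X}_f$ and a terminal cost $V_f$ defined on $\mathbb{X}_f$. Horizon-$N$ problem at $x$: minimize $\sum_{k=0}^{N-1}l(x(k),u(k))+V_f(x(N))$ over control sequences that are feasible from $x$ and satisfy $x(N)\in\mathbb{X}_f$. Let $V_N^0(x)$ be its minimum value, which is assumed to be attained whenever the feasible set is nonempty. Let $(u^0_N(0),\ldots,u^0_N(N-1))$ be a minimizer, and set $\kappa_N(x)=u_N^0(0)$. For $N=0$, $V_0^0(x)=V_f(x)$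 for $x\in\mathbb{X}_f$. Standing assumptions: (A1) $f,l,h,V_f$ are continuous on an open set containing $\mathbb{X}\times\mathbb{U}$ (for $V_f$, an open set containing $\mathbb{X}_f$). The stage cost $l$ is nonnegative definite in $(x,u)$ and positive definite in $u$. $V_f$ is positive definite on $\mathbb{X}_f$. Moreover $f(0,0)=0$, $l(0,0)=0$ and $V_f(0)=0$. (A2) $\mathbb{X}$ and $\mathbb{X}_f$ are closed, $\mathbb{X}_f\subset\mathbb{X}$, $\mathbb{U}$ is compact, and $\mathbb{X},\mathbb{X}_f,\mathbb{U}$ each contain a neighborhood of the origin. (A3) For every $x\in\mathbb{X}_f$ there is a control $u$ feasible at $x$ with $f(x,u)\in\mathbb{X}_f$ and $l(x,u)+V_f(f(x,u))\le V_f(x)$. (A4) For every $x\in\mathbb{X}$ there exist an integer $N\ge0$ and a feasible control sequence of length $N$ from $x$ whose state sequence satisfies $x(N)\in\mathbb{X}_f$. For $x\in\mathbb{X}$, $N(x)$ denotes the minimum such $N$. (A5) There is an integer $M\ge 0$ with $N(x)\le M$ for all $x\in\mathbb{X}$. (A6) There are class $\mathcal{K}_\infty$ functions $\alpha_1,\alpha_2$ with $l(x,u)\ge\alpha_1(|x|)$ for all $x\in\mathbb{X}$, $u\in\mathbb{U}$, and $V_f(x)\le\alpha_2(|x|)$ for all $x\in\mathbb{X}_f$. Define $V(x)=V^0_{N(x)}(x)$ for $x\in\mathbb{X}$. For $N(x)\ge1$ set $\kappa(x)=\kappa_{N(x)}(x)$. For $N(x)=0$ (equivalently $x\in\mathbb{X}_f$),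 let $\kappa(x)$ be a feasible control $u$ as in (A3). *)

From HB Require Import structures.
From mathcomp Require Import all_boot all_order all_algebra.
From mathcomp Require Import all_classical all_reals all_analysis.
Set Implicit Arguments. Unset Strict Implicit. Unset Printing Implicit Defensive.
Import Order.TTheory GRing.Theory Num.Theory.
Import numFieldNormedType.Exports.
Local Open Scope classical_set_scope.
Local Open Scope ring_scope.

Definition enorm {R : realType} {n : nat} (x : 'rV[R]_n) : R :=
  Num.sqrt (\sum_(i < n) x ord0 i ^+ 2).

Definition classKinf {R : realType} (a : R -> R) : Prop :=
  [/\ a 0 = 0,
      {within [set r : R | 0 <= r], continuous a},
      {in [set r : R | 0 <= r] &, {homo a : r s / r < s}}
    & a r @[r --> +oo] --> +oo].

Fixpoint traj {X U : Type} (f : X -> U -> X) (x : X) (u : nat -> U) (k : nat)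
  : X :=
  match k with
  | 0 => x
  | k'.+1 => f (traj f x u k') (u k')
  end.

Section MPC.
Context {R : realType} {n m p : nat}.
Local Notation st := 'rV[R]_n.
Local Notation ct := 'rV[R]_m.
Local Notation ot := 'rV[R]_p.

Definition feas_at (f : st -> ct -> st) (h : st -> ct -> ot)
  (Xs : set st) (Us : set ct) (Ys : set ot) (x : st) (u : ct) : Prop :=
  [/\ Us u, Xs (f x u) & Ys (h x u)].

(* Control sequence (u(0),...,u(N-1)) (entries past N-1 are irrelevant)
   is feasible from x. *)
Definition feas_seq f h Xs Us Ys (N : nat) (x : st) (u : nat -> ct) : Prop :=
  forall k, (k < N)%N -> feas_at f h Xs Us Ys (traj f x u k) (u k).

Definition admissible f h Xs Us Ys (Xf : set st) (N : nat) (x : st)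
  (u : nat -> ct) : Prop :=
  feas_seq f h Xs Us Ys N x u /\ Xf (traj f x u N).

Definition costN (f : st -> ct -> st) (l : st -> ct -> R) (Vf : st -> R)
  (N : nat) (x : st) (u : nat -> ct) : R :=
  \sum_(k < N) l (traj f x u k) (u k) + Vf (traj f x u N).

(* Optimal value V_N^0(x) (infimum of the cost over admissible sequences;
   it is a minimum under the attainment hypothesis). *)
Definition VN0 f h l Vf Xs Us Ys Xf (N : nat) (x : st) : R :=
  inf [set costN f l Vf N x u | u in admissible f h Xs Us Ys Xf N x].

Definition is_minimizer f h l Vf Xs Us Ys Xf (N : nat) (x : st)
  (u : nat -> ct) : Prop :=
  admissible f h Xs Us Ys Xf N x u /\
  forall u', admissible f h Xs Us Ys Xf N x u' ->
    costN f l Vf N x u <= costN f l Vf N x u'.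

End MPC.

(* Least natural number satisfying P (0 if none exists). *)
Lemma ex_asbool_nat (P : nat -> Prop) :
  (exists k, P k) -> exists k, `[< P k >].
Proof. by case=> k Pk; exists k; apply/asboolP. Qed.

Definition least_nat (P : nat -> Prop) : nat :=
  match pselect (exists k, P k) with
  | left H => ex_minn (ex_asbool_nat H)
  | right _ => 0%N
  end.

Section MPC2.
Context {R : realType} {n m p : nat}.
Local Notation st := 'rV[R]_n.
Local Notation ct := 'rV[R]_m.
Local Notation ot := 'rV[R]_p.

Definition Nmin (f : st -> ct -> st) (h : st -> ct -> ot) Xs Us Ys
  (Xf : set st) (x : st) : nat :=
  least_nat (fun N => exists u, admissible f h Xs Us Ys Xf N x u).

Definition Vmpc f h l Vf Xs Us Ys Xf (x : st) : R :=
  VN0 f h l Vf Xs Us Ys Xf (Nmin f h Xs Us Ys Xf x) x.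

End MPC2.

From HB Require Import structures.
From mathcomp Require Import all_boot all_order all_algebra.
From mathcomp Require Import all_classical all_reals all_analysis.
Import Order.TTheory GRing.Theory Num.Theory.
Import numFieldNormedType.Exports.

Set Implicit Arguments.
Unset Strict Implicit.
Unset Printing Implicit Defensive.

Local Open Scope classical_set_scope.
Local Open Scope ring_scope.

(* The tail of an optimal control sequence from x is admissible from the
   successor state with one step less, and N(f(x, kappa x)) = N(x) - 1, so
   V(f(x, kappa x)) is at most the optimal cost from x minus its first stage
   cost l(x, kappa x) >= alpha1 |x|.  When N(x) = 0 the same inequality is the
   terminal decrease condition (A3).  Since V >= 0, the decrease inequality
   also gives the lower bound V(x) >= alpha1 |x|, and on X_f we have
   V = V_f <= alpha2 |x|. *)

Lemma inf_eq_minimum (R : realType) (S : set R) (a : R) :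
  S a -> (forall b, S b -> a <= b) -> inf S = a.
Proof.
move=> Sa lbS; apply/eqP; rewrite eq_le; apply/andP; split.
  by apply: (ge_inf (E := S)) => //; exists a => b /lbS.
by apply: lb_le_inf; [exists a | move=> b /lbS].
Qed.

Section LeastNat.
Variable P : nat -> Prop.
Hypothesis exP : exists k, P k.

Lemma least_natP : P (least_nat P).
Proof.
rewrite /least_nat; case: pselect => [H|//].
by case: ex_minnP => k /asboolP.
Qed.

Lemma least_nat_le k : P k -> (least_nat P <= k)%N.
Proof.
move=> Pk; rewrite /least_nat; case: pselect => [H|//].
by case: ex_minnP => j _ /(_ k); apply; apply/asboolP.
Qed.

End LeastNat.

Lemma trajS X U (f : X -> U -> X) x u k :
  traj f x u k.+1 = traj f (f x (u 0%N)) (fun j => u j.+1) k.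
Proof. by elim: k => //= k <-. Qed.

Definition scons {U : Type} (a : U) (w : nat -> U) : nat -> U :=
  fun j => if j is j'.+1 then w j' else a.

Section Horizon.
Context {R : realType} {n m p : nat}
  (f : 'rV[R]_n -> 'rV[R]_m -> 'rV[R]_n)
  (h : 'rV[R]_n -> 'rV[R]_m -> 'rV[R]_p)
  (l : 'rV[R]_n -> 'rV[R]_m -> R) (Vf : 'rV[R]_n -> R)
  (Xs : set 'rV[R]_n) (Us : set 'rV[R]_m) (Ys : set 'rV[R]_p)
  (Xf : set 'rV[R]_n).

Local Notation feas := (feas_at f h Xs Us Ys).
Local Notation adm := (admissible f h Xs Us Ys Xf).
Local Notation cost := (costN f l Vf).
Local Notation VN := (VN0 f h l Vf Xs Us Ys Xf).
Local Notation Nx := (Nmin f h Xs Us Ys Xf).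
Local Notation V := (Vmpc f h l Vf Xs Us Ys Xf).
Local Notation minimizer := (is_minimizer f h l Vf Xs Us Ys Xf).

Lemma admissibleS N x u : adm N.+1 x u ->
  feas x (u 0%N) /\ adm N (f x (u 0%N)) (fun j => u j.+1).
Proof.
case=> feas_u Xf_end; split; first exact: (feas_u 0%N).
by split=> [k kN|]; rewrite -trajS //; apply: feas_u.
Qed.

Lemma admissible_scons N x a w :
  feas x a -> adm N (f x a) w -> adm N.+1 x (scons a w).
Proof.
move=> feas_a [feas_w Xf_end].
by split=> [[|k] kN|]; rewrite ?trajS //; apply: feas_w.
Qed.

Lemma costNS N x u :
  cost N.+1 x u = l x (u 0%N) + cost N (f x (u 0%N)) (fun j => u j.+1).
Proof.
rewrite /costN big_ord_recl -addrA trajS; congr (_ + (_ + _)).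
by apply: eq_bigr => i _; rewrite lift0 trajS.
Qed.

Lemma costN_ge0 :
  (forall x u, Xs x -> Us u -> 0 <= l x u) -> (forall x, Xf x -> 0 <= Vf x) ->
  forall N x u, Xs x -> adm N x u -> 0 <= cost N x u.
Proof.
move=> l_ge0 Vf_ge0; elim=> [|N IH] x u Xx.
  by case=> _ Xf_x; rewrite /costN big_ord0 add0r; apply: Vf_ge0.
rewrite costNS => /admissibleS [[Uu Xx' _] adm_tail].
by rewrite addr_ge0 ?l_ge0 ?(IH _ _ Xx').
Qed.

Lemma VN0_minimizer N x u : minimizer N x u -> VN N x = cost N x u.
Proof.
case=> adm_u min_u; apply: inf_eq_minimum; first by exists u.
by move=> _ [u' adm_u' <-]; apply: min_u.
Qed.

Lemma Nmin_admissible x : (exists N u, adm N x u) -> exists u, adm (Nx x) x u.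
Proof. exact: (@least_natP (fun N => exists u, adm N x u)). Qed.

Lemma Nmin_le N x u : adm N x u -> (Nx x <= N)%N.
Proof. by move=> adm_u; apply: least_nat_le; exists u. Qed.

Lemma Nmin_Xf x : Xf x -> Nx x = 0%N.
Proof. by move=> Xf_x; apply/eqP; rewrite -leqn0 (@Nmin_le 0 x (fun=> 0)). Qed.

Lemma Vmpc_Xf x : Xf x -> V x = Vf x.
Proof.
move=> Xf_x; rewrite /Vmpc Nmin_Xf //; apply: inf_eq_minimum.
  by exists (fun=> 0) => //; rewrite /costN big_ord0 add0r.
by move=> _ [u _ <-]; rewrite /costN big_ord0 add0r.
Qed.

Lemma Nmin_succ N x a w : Nx x = N.+1 ->
  feas x a -> adm N (f x a) w -> Nx (f x a) = N.
Proof.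
move=> Nx_x feas_a adm_w; apply/eqP; rewrite eqn_leq (Nmin_le adm_w) /=.
have [w' adm_w'] : exists w', adm (Nx (f x a)) (f x a) w'.
  by apply: Nmin_admissible; exists N, w.
by rewrite -ltnS -Nx_x (Nmin_le (admissible_scons feas_a adm_w')).
Qed.

Section Optimal.
Hypothesis reachable : forall x, Xs x -> exists N u, adm N x u.
Hypothesis attained : forall N x, (exists u, adm N x u) ->
  exists u, minimizer N x u.

Lemma Vmpc_ge0 :
  (forall x u, Xs x -> Us u -> 0 <= l x u) -> (forall x, Xf x -> 0 <= Vf x) ->
  forall x, Xs x -> 0 <= V x.
Proof.
move=> l_ge0 Vf_ge0 x Xx.
have [u adm_u] := Nmin_admissible (reachable Xx).
have [v min_v] := attained (ex_intro _ u adm_u).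
rewrite /Vmpc (VN0_minimizer min_v).
by case: min_v => adm_v _; apply: costN_ge0 adm_v.
Qed.

Section Feedback.
Variable kappa : 'rV[R]_n -> 'rV[R]_m.
Hypothesis kappa_pos : forall x, Xs x -> (0 < Nx x)%N ->
  exists u, minimizer (Nx x) x u /\ u 0%N = kappa x.
Hypothesis kappa_0 : forall x, Xs x -> Nx x = 0%N ->
  [/\ feas x (kappa x), Xf (f x (kappa x)) &
      l x (kappa x) + Vf (f x (kappa x)) <= Vf x].

Lemma feas_kappa x : Xs x -> feas x (kappa x).
Proof.
move=> Xx; case Nx_x: (Nx x) => [|N]; first by case: (kappa_0 Xx Nx_x).
have Nx_pos : (0 < Nx x)%N by rewrite Nx_x.
have [u [[adm_u _] <-]] := kappa_pos Xx Nx_pos.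
by rewrite Nx_x in adm_u; case: (admissibleS adm_u).
Qed.

Lemma Vmpc_decrease x : Xs x -> l x (kappa x) + V (f x (kappa x)) <= V x.
Proof.
move=> Xx; case Nx_x: (Nx x) => [|N].
  have [u [_ Xf_x]] := Nmin_admissible (reachable Xx); rewrite Nx_x in Xf_x.
  by case: (kappa_0 Xx Nx_x) => _ Xf_next; rewrite !Vmpc_Xf.
have Nx_pos : (0 < Nx x)%N by rewrite Nx_x.
have [u [min_u u0]] := kappa_pos Xx Nx_pos.
have [adm_u _] := min_u; rewrite Nx_x in adm_u.
have [feas_a adm_tail] := admissibleS adm_u; rewrite u0 in feas_a adm_tail.
rewrite {2}/Vmpc (VN0_minimizer min_u) Nx_x costNS u0 lerD2l.
rewrite /Vmpc (Nmin_succ Nx_x feas_a adm_tail).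
have [z min_z] := attained (ex_intro _ _ adm_tail).
by rewrite (VN0_minimizer min_z); apply: min_z.2.
Qed.

End Feedback.

End Optimal.

End Horizon.

Theorem proposition1 (R : realType) (n m p : nat)
  (f : 'rV[R]_n -> 'rV[R]_m -> 'rV[R]_n)
  (h : 'rV[R]_n -> 'rV[R]_m -> 'rV[R]_p)
  (l : 'rV[R]_n -> 'rV[R]_m -> R) (Vf : 'rV[R]_n -> R)
  (Xs : set 'rV[R]_n) (Us : set 'rV[R]_m) (Ys : set 'rV[R]_p)
  (Xf : set 'rV[R]_n) (kappa : 'rV[R]_n -> 'rV[R]_m)
  (* (A1) *)
  (A1_cont : exists O : set ('rV[R]_n * 'rV[R]_m), [/\ open O, Xs `*` Us `<=` O &
      forall z, O z ->
        [/\ {for z, continuous (fun w => f w.1 w.2)},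
            {for z, continuous (fun w => l w.1 w.2)} &
            {for z, continuous (fun w => h w.1 w.2)}]])
  (A1_contVf : exists O : set 'rV[R]_n, [/\ open O, Xf `<=` O &
      forall z, O z -> {for z, continuous Vf}])
  (A1_lnn : forall x u, Xs x -> Us u -> 0 <= l x u)
  (A1_lpd : forall x u, Xs x -> Us u -> u != 0 -> 0 < l x u)
  (A1_Vfpd : forall x, Xf x -> x != 0 -> 0 < Vf x)
  (A1_f0 : f 0 0 = 0) (A1_l0 : l 0 0 = 0) (A1_Vf0 : Vf 0 = 0)
  (* (A2) *)
  (A2_Xcl : closed Xs) (A2_Xfcl : closed Xf) (A2_XfX : Xf `<=` Xs)
  (A2_Ucpt : compact Us)
  (A2_Xnbhs : nbhs (0 : 'rV[R]_n) Xs) (A2_Xfnbhs : nbhs (0 : 'rV[R]_n) Xf)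
  (A2_Unbhs : nbhs (0 : 'rV[R]_m) Us)
  (* (A3) *)
  (A3 : forall x, Xf x -> exists u, [/\ feas_at f h Xs Us Ys x u, Xf (f x u) &
      l x u + Vf (f x u) <= Vf x])
  (* (A4) *)
  (A4 : forall x, Xs x -> exists N u, admissible f h Xs Us Ys Xf N x u)
  (* (A5) *)
  (A5 : exists M : nat, forall x, Xs x -> (Nmin f h Xs Us Ys Xf x <= M)%N)
  (* (A6) *)
  (A6 : exists a1 a2 : R -> R, [/\ classKinf a1, classKinf a2,
      (forall x u, Xs x -> Us u -> a1 (enorm x) <= l x u) &
      (forall x, Xf x -> Vf x <= a2 (enorm x))])
  (* the minimum of each horizon-N problem is attained when feasible *)
  (attained : forall (N : nat) x, (exists u, admissible f h Xs Us Ys Xf N x u) ->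
      exists u, is_minimizer f h l Vf Xs Us Ys Xf N x u)
  (* definition of kappa *)
  (kappa_pos : forall x, Xs x -> (0 < Nmin f h Xs Us Ys Xf x)%N ->
      exists u, is_minimizer f h l Vf Xs Us Ys Xf (Nmin f h Xs Us Ys Xf x) x u
                /\ u 0%N = kappa x)
  (kappa_0 : forall x, Xs x -> Nmin f h Xs Us Ys Xf x = 0%N ->
      [/\ feas_at f h Xs Us Ys x (kappa x), Xf (f x (kappa x)) &
          l x (kappa x) + Vf (f x (kappa x)) <= Vf x]) :
  exists a1 a2 : R -> R, [/\ classKinf a1, classKinf a2,
    (forall x, Xs x -> a1 (enorm x) <= Vmpc f h l Vf Xs Us Ys Xf x),
    (forall x, Xf x -> Vmpc f h l Vf Xs Us Ys Xf x <= a2 (enorm x)) &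
    (forall x, Xs x -> Vmpc f h l Vf Xs Us Ys Xf (f x (kappa x))
                   <= Vmpc f h l Vf Xs Us Ys Xf x - a1 (enorm x))].
Proof.
have [a1 [a2 [a1K a2K l_ge_a1 Vf_le_a2]]] := A6.
have Vf_ge0 x : Xf x -> 0 <= Vf x.
  by move=> Xf_x; have [->|/(A1_Vfpd _ Xf_x)/ltW] := eqVneq x 0; rewrite ?A1_Vf0.
have feas_k := feas_kappa kappa_pos kappa_0.
have decrease x : Xs x -> Vmpc f h l Vf Xs Us Ys Xf (f x (kappa x))
    <= Vmpc f h l Vf Xs Us Ys Xf x - a1 (enorm x).
  move=> Xx; have [Uk _ _] := feas_k x Xx.
  rewrite lerBrDr addrC.
  apply: le_trans (Vmpc_decrease A4 attained kappa_pos kappa_0 Xx).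
  by rewrite lerD2r l_ge_a1.
exists a1, a2; split=> // x Xx.
  have [_ Xnext _] := feas_k x Xx.
  rewrite -subr_ge0; apply: le_trans (decrease x Xx).
  exact: (Vmpc_ge0 A4 attained A1_lnn Vf_ge0 Xnext).
by rewrite Vmpc_Xf //; apply: Vf_le_a2.
Qed.
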